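(* Let $\mathbf{L}\in\{\mathbf{K}_D,\mathbf{KD}_D,\mathbf{KT}_D\}$. The contraction rules are height-preserving admissible in $\mathsf{G}(\mathbf{L})$: for all finite multisets $\Gamma,\Delta$, every formula $\lambda$ and every $n$, if $\Gamma\Rightarrow\Delta,\lambda,\lambda$ has a derivation of height at most $n$ then so does $\Gamma\Rightarrow\Delta,\lambda$, and if $\lambda,\lambda,\Gamma\Rightarrow\Delta$ has a derivation of height at most $n$ then so does $\lambda,\Gamma\Rightarrow\Delta$.
   Context: Language: fix a finite nonempty set $\mathsf{Agt}$ of agents and a countable set $\mathsf{Prop}$ of propositional variables; $\mathsf{Grp}$ is the set of nonempty subsets of $\mathsf{Agt}$. Formulas: $\alpha::=p\mid\bot\mid\alpha\wedge\alpha\mid\alpha\vee\alpha\mid\alpha\rightarrow\alpha\mid\neg\alpha\mid D_G\alpha$ ($p\in\mathsf{Prop}$, $G\in\mathsf{Grp}$). Outmost-boxed formula: one of the form $D_G\gamma$. Sequent calculi (sequents $\Gamma\Rightarrow\Delta$ are pairs of finite multisets; a derivation is a finite tree built from initial sequents by rules; its height is the maximum length of a branch from the end sequent to an initial sequent): $\mathsf{G}(\mathbf{K}_D)$ has initial sequents $\Gamma,p\Rightarrow p,\Delta$ and $\bot,\Gamma\Rightarrow\Delta$; rules $(R\wedge)$ from $\Gamma\Rightarrow\Delta,\alpha_1$ and $\Gamma\Rightarrow\Delta,\alpha_2$ infer $\Gamma\Rightarrow\Delta,\alpha_1\wedge\alpha_2$; $(L\wedge)$ from $\alpha_1,\alpha_2,\Gamma\Rightarrow\Delta$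 infer $\alpha_1\wedge\alpha_2,\Gamma\Rightarrow\Delta$; $(R\vee)$ from $\Gamma\Rightarrow\Delta,\alpha_1,\alpha_2$ infer $\Gamma\Rightarrow\Delta,\alpha_1\vee\alpha_2$; $(L\vee)$ from $\alpha_1,\Gamma\Rightarrow\Delta$ and $\alpha_2,\Gamma\Rightarrow\Delta$ infer $\alpha_1\vee\alpha_2,\Gamma\Rightarrow\Delta$; $(R\rightarrow)$ from $\alpha_1,\Gamma\Rightarrow\Delta,\alpha_2$ infer $\Gamma\Rightarrow\Delta,\alpha_1\rightarrow\alpha_2$; $(L\rightarrow)$ from $\Gamma\Rightarrow\Delta,\alpha_1$ and $\alpha_2,\Gamma\Rightarrow\Delta$ infer $\alpha_1\rightarrow\alpha_2,\Gamma\Rightarrow\Delta$; $(R\neg)$ from $\alpha,\Gamma\Rightarrow\Delta$ infer $\Gamma\Rightarrow\Delta,\neg\alpha$; $(L\neg)$ from $\Gamma\Rightarrow\Delta,\alpha$ infer $\neg\alpha,\Gamma\Rightarrow\Delta$; $(D_K)$: from $\alpha_1,\dots,\alpha_n\Rightarrow\beta$ ($n\ge0$) infer $\Sigma,D_{G_1}\alpha_1,\dots,D_{G_n}\alpha_n\Rightarrow D_G\beta,\Omega$ where all $G_i\subseteq G$, $\Sigma$ consists only of propositional variables, $\bot$, and $D_H\gamma$ with $H\not\subseteq G$, and $\Omega$ only of propositional variables, $\bot$, outmost-boxed formulas. $\mathsf{G}(\mathbf{KD}_D)$ adds $(D_D)$: from $\Gamma\Rightarrow$ with $\Gamma\neq\emptyset$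 infer $\Sigma,D_{\{a\}}\Gamma\Rightarrow\Omega$, $\Sigma$ only propositional variables, $\bot$, $D_H\gamma$ with $H\neq\{a\}$; $\Omega$ only propositional variables, $\bot$, outmost-boxed formulas. $\mathsf{G}(\mathbf{KT}_D)$ adds to $\mathsf{G}(\mathbf{K}_D)$ $(D_T)$: from $D_G\alpha,\alpha,\Gamma\Rightarrow\Delta$ infer $D_G\alpha,\Gamma\Rightarrow\Delta$. *)

From Stdlib Require Import List Permutation.
From mathcomp Require Import all_boot.
Set Implicit Arguments. Unset Strict Implicit. Unset Printing Implicit Defensive.

Section Logic.
Variable Agt : finType.

Definition grp := {G : {set Agt} | G != set0}.

Inductive form : Type :=
| Var : nat -> form
| Bot : form
| And : form -> form -> form
| Or  : form -> form -> form
| Imp : form -> form -> form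
| Neg : form -> form
| Box : grp -> form -> form.

Lemma set1_nonempty (a : Agt) : [set a] != set0.
Proof. by apply/set0Pn; exists a; rewrite in_set1. Qed.

Definition sing (a : Agt) : grp := exist _ [set a] (set1_nonempty a).

Definition omega_ok (f : form) : Prop :=
  match f with Var _ | Bot | Box _ _ => True | _ => False end.

Definition sigmaK_ok (G : grp) (f : form) : Prop :=
  match f with
  | Var _ | Bot => True
  | Box H _ => ~~ (val H \subset val G)
  | _ => False end.

Definition sigmaD_ok (a : Agt) (f : form) : Prop :=
  match f with
  | Var _ | Bot => True
  | Box H _ => val H <> [set a]
  | _ => False end.

Inductive logic : Type := LK | LKD | LKT.

(* der L n Γ Δ : the sequent Γ ⇒ Δ has a derivation in G(L) of height at most n.
   Sequents are pairs of finite multisets, represented by lists modulo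
   permutation (constructor d_perm, which does not change height). *)
Inductive der (L : logic) : nat -> list form -> list form -> Prop :=
| d_perm n G D G' D' : der L n G D -> Permutation G G' -> Permutation D D' ->
    der L n G' D'
| d_ax n p G D : der L n (Var p :: G) (Var p :: D)
| d_bot n G D : der L n (Bot :: G) D
| d_Rand n G D a1 a2 : der L n G (a1 :: D) -> der L n G (a2 :: D) ->
    der L n.+1 G (And a1 a2 :: D)
| d_Land n G D a1 a2 : der L n (a1 :: a2 :: G) D ->
    der L n.+1 (And a1 a2 :: G) D
| d_Ror n G D a1 a2 : der L n G (a1 :: a2 :: D) ->
    der L n.+1 G (Or a1 a2 :: D)
| d_Lor n G D a1 a2 : der L n (a1 :: G) D -> der L n (a2 :: G) D ->
    der L n.+1 (Or a1 a2 :: G) D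
| d_Rimp n G D a1 a2 : der L n (a1 :: G) (a2 :: D) ->
    der L n.+1 G (Imp a1 a2 :: D)
| d_Limp n G D a1 a2 : der L n G (a1 :: D) -> der L n (a2 :: G) D ->
    der L n.+1 (Imp a1 a2 :: G) D
| d_Rneg n G D a : der L n (a :: G) D -> der L n.+1 G (Neg a :: D)
| d_Lneg n G D a : der L n G (a :: D) -> der L n.+1 (Neg a :: G) D
| d_DK n (Sig Om : list form) (ps : list (grp * form)) (G : grp) (b : form) :
    der L n (map snd ps) [:: b] ->
    Forall (fun p : grp * form => val (fst p) \subset val G) ps ->
    Forall (sigmaK_ok G) Sig -> Forall omega_ok Om ->
    der L n.+1 (Sig ++ map (fun p : grp * form => Box (fst p) (snd p)) ps) (Box G b :: Om)
| d_DD n (Sig Om Gm : list form) (a : Agt) :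
    L = LKD -> Gm <> nil -> der L n Gm nil ->
    Forall (sigmaD_ok a) Sig -> Forall omega_ok Om ->
    der L n.+1 (Sig ++ map (Box (sing a)) Gm) Om
| d_DT n G D (H : grp) a :
    L = LKT -> der L n (Box H a :: a :: G) D -> der L n.+1 (Box H a :: G) D.

End Logic.

From Stdlib Require Import List Permutation Lia.
From mathcomp Require Import all_boot.
Set Implicit Arguments. Unset Strict Implicit. Unset Printing Implicit Defensive.

(* Induction on the height, simultaneously for both sides.  If neither copy of the
   contracted formula is principal in the last rule, contract in the premises and
   reapply the rule.  If one copy is principal in a propositional rule, the other
   copy is removed from each premise by height-preserving invertibility of that
   rule, and the duplicated immediate subformulas this leaves are contracted by
   the induction hypothesis.  The modal rules admit arbitrary side formulas in
   Sigma and Omega, so a duplicate there is simply dropped; a duplicated boxed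
   formula D_G a among the principal ones of (D_K) or (D_D) is handled by
   contracting a in the premise, and (D_T) keeps its principal formula in the
   premise, so the induction hypothesis applies to it directly. *)

Lemma cat_app (T : Type) (s t : seq T) : s ++ t = (s ++ t)%list.
Proof. by elim: s => //= x s ->. Qed.

Lemma map_List_map (T U : Type) (f : T -> U) (s : seq T) : map f s = List.map f s.
Proof. by elim: s => //= x s ->. Qed.

Lemma In_cat (T : Type) (x : T) (s t : seq T) : In x (s ++ t) <-> In x s \/ In x t.
Proof. by rewrite cat_app; apply: in_app_iff. Qed.

Lemma In_perm_cons (T : Type) (x : T) (s : seq T) : In x s -> exists t, Permutation s (x :: t).
Proof.
move=> xs; have [s1 [s2 ->]] := in_split _ _ xs.
by exists (s1 ++ s2)%list; apply/Permutation_sym/Permutation_middle.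
Qed.

Lemma perm_cons_cases (T : Type) (x y : T) (s t : seq T) :
  Permutation (x :: s) (y :: t) ->
  x = y /\ Permutation s t \/ exists r, Permutation s (y :: r) /\ Permutation t (x :: r).
Proof.
move=> p; have [xy|ys] : x = y \/ In y s by exact: Permutation_in (Permutation_sym p) (in_eq _ _).
  by subst y; left; split; last exact: Permutation_cons_inv p.
right; have [r ps] := In_perm_cons ys; exists r; split => //.
apply: (@Permutation_cons_inv _ _ _ y); apply: Permutation_trans (Permutation_sym p) _.
exact: Permutation_trans (perm_skip x ps) (perm_swap _ _ _).
Qed.

Lemma perm_dup_cases (T : Type) (x y : T) (s t : seq T) :
  Permutation (x :: x :: s) (y :: t) ->
  x = y /\ Permutation t (x :: s) \/
  exists r, Permutation t (x :: x :: r) /\ Permutation s (y :: r).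
Proof.
move=> p0; case: (perm_cons_cases p0) => [[xy p]|[r [p1 p2]]].
  by subst y; left; split=> //; exact: Permutation_sym.
case: (perm_cons_cases p1) => [[xy p]|[r' [q1 q2]]].
  by subst y; left; split=> //; apply: Permutation_trans p2 (perm_skip _ (Permutation_sym p)).
by right; exists r'; split=> //; exact: Permutation_trans p2 (perm_skip _ q2).
Qed.

Lemma perm_contract_cons (T : Type) (x y : T) (s t : seq T) :
  Permutation (x :: x :: s) (y :: t) ->
  exists2 t', Permutation (x :: s) (y :: t') & Permutation t (x :: t').
Proof.
move=> p; case: (perm_cons_cases p) => [[xy q]|[r [p1 p2]]]; last by exists r.
by subst y; exists s; last exact: Permutation_sym.
Qed.

Lemma form_eq_dec (Agt : finType) (f g : form Agt) : {f = g} + {f <> g}.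
Proof. decide equality; [exact: PeanoNat.Nat.eq_dec | exact: eq_comparable]. Qed.

(* Decides an equation between multisets of formulas by comparing multiplicities,
   using the permutations in the context as linear constraints. *)
Ltac solve_perm :=
  let x := fresh "x" in
  apply/(Permutation_count_occ (@form_eq_dec _)) => x;
  repeat match goal with H : Permutation _ _ |- _ =>
    move: (proj1 (Permutation_count_occ (@form_eq_dec _) _ _) H x); clear H end;
  repeat progress rewrite ?cat_app ?map_List_map ?count_occ_app /=;
  repeat match goal with |- context [form_eq_dec ?a ?b] => case: (form_eq_dec a b) end;
  intros; subst; try congruence; lia.

Section Contraction.
Variables (Agt : finType) (L : logic).
Implicit Types (f g l : form Agt) (G D X Y Sig Om : seq (form Agt)) (n k : nat).

Definition box_pair (p : grp Agt * form Agt) : form Agt := Box p.1 p.2.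

Lemma box_pair_inj : injective box_pair.
Proof. by case=> [? ?] [? ?] [-> ->]. Qed.

Lemma perm_cons_cat_map (T : Type) (box : T -> form Agt) l G Sig (ts : seq T) :
  Permutation (l :: G) (Sig ++ map box ts) ->
  (exists2 Sig', Permutation Sig (l :: Sig') & Permutation G (Sig' ++ map box ts)) \/
  (exists t ts', [/\ box t = l, Permutation ts (t :: ts') & Permutation G (Sig ++ map box ts')]).
Proof.
move=> p; have /In_cat [inS|] := Permutation_in _ p (in_eq _ _).
  have [Sig' pS] := In_perm_cons inS.
  left; exists Sig' => //; apply: (@Permutation_cons_inv _ _ _ l).
  by apply: Permutation_trans p _; solve_perm.
rewrite map_List_map => /in_map_iff [t [tl int]]; subst l; have [ts' pt] := In_perm_cons int.
right; exists t, ts'; split=> //; apply: (@Permutation_cons_inv _ _ _ (box t)).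
have pm := Permutation_map box pt; apply: Permutation_trans p _; solve_perm.
Qed.

Lemma perm_dup_cat_map (T : Type) (box : T -> form Agt) l G Sig (ts : seq T) :
  injective box -> Permutation (l :: l :: G) (Sig ++ map box ts) ->
  (exists2 Sig', Permutation Sig (l :: Sig') & Permutation (l :: G) (Sig' ++ map box ts)) \/
  (exists t ts', [/\ box t = l, Permutation ts (t :: t :: ts')
                   & Permutation (l :: G) (Sig ++ map box (t :: ts'))]).
Proof.
move=> box_inj /perm_cons_cat_map [|[t [ts1 [tl pt p]]]]; first by left.
subst l; have pm := Permutation_map box pt.
case/perm_cons_cat_map: p => [[Sig' pS p]|[t' [ts' [/box_inj tt pt' p]]]].
  by left; exists Sig' => //; solve_perm.
subst t'; right; exists t, ts'; split=> //; first exact: Permutation_trans pt (perm_skip t pt').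
have pm' := Permutation_map box pt'; solve_perm.
Qed.

Definition compound f : bool :=
  match f with And _ _ | Or _ _ | Imp _ _ | Neg _ => true | _ => false end.

Lemma omega_ok_noncompound g : omega_ok g -> ~~ compound g.
Proof. by case: g. Qed.

Lemma sigmaK_ok_noncompound H g : sigmaK_ok H g -> ~~ compound g.
Proof. by case: g. Qed.

Lemma sigmaD_ok_noncompound a g : sigmaD_ok a g -> ~~ compound g.
Proof. by case: g. Qed.

Lemma compound_notin (P : form Agt -> Prop) f G :
  (forall g, P g -> ~~ compound g) -> compound f -> Forall P G -> ~ In f G.
Proof. by move=> Pnc cf /Forall_forall PG /PG/Pnc; rewrite cf. Qed.

Lemma compound_notin_cat_map (T : Type) (P : form Agt -> Prop) (box : T -> form Agt) f Sig ts :
  (forall g, P g -> ~~ compound g) -> (forall t, ~~ compound (box t)) ->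
  compound f -> Forall P Sig -> ~ In f (Sig ++ map box ts).
Proof.
move=> Pnc boxnc cf PSig /In_cat [|]; first exact: compound_notin Pnc cf PSig.
by rewrite map_List_map => /in_map_iff [t [tf _]]; move: cf; rewrite -tf (negbTE (boxnc t)).
Qed.

(* Each pair (X, Y) is a premise of the rule introducing [f], given as the formulas
   added to the antecedent and to the succedent of the context. *)
Definition rpremises f : seq (seq (form Agt) * seq (form Agt)) :=
  match f with
  | And a1 a2 => [:: ([::], [:: a1]); ([::], [:: a2])]
  | Or a1 a2 => [:: ([::], [:: a1; a2])]
  | Imp a1 a2 => [:: ([:: a1], [:: a2])]
  | Neg a => [:: ([:: a], [::])]
  | _ => [::]
  end.

Definition lpremises f : seq (seq (form Agt) * seq (form Agt)) :=
  match f with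
  | And a1 a2 => [:: ([:: a1; a2], [::])]
  | Or a1 a2 => [:: ([:: a1], [::]); ([:: a2], [::])]
  | Imp a1 a2 => [:: ([::], [:: a1]); ([:: a2], [::])]
  | Neg a => [:: ([::], [:: a])]
  | _ => [::]
  end.

Lemma rpremises_compound f X Y : In (X, Y) (rpremises f) -> compound f.
Proof. by case: f. Qed.

Lemma lpremises_compound f X Y : In (X, Y) (lpremises f) -> compound f.
Proof. by case: f. Qed.

Lemma der_ruleR n G D f : compound f ->
  (forall X Y, In (X, Y) (rpremises f) -> der L n (X ++ G) (Y ++ D)) -> der L n.+1 G (f :: D).
Proof.
case: f => //= [a1 a2|a1 a2|a1 a2|a] _ prem.
- by apply: d_Rand; [apply: (prem [::] [:: a1]) | apply: (prem [::] [:: a2])]; tauto.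
- by apply: d_Ror; apply: (prem [::] [:: a1; a2]); tauto.
- by apply: d_Rimp; apply: (prem [:: a1] [:: a2]); tauto.
- by apply: d_Rneg; apply: (prem [:: a] [::]); tauto.
Qed.

Lemma der_ruleL n G D f : compound f ->
  (forall X Y, In (X, Y) (lpremises f) -> der L n (X ++ G) (Y ++ D)) -> der L n.+1 (f :: G) D.
Proof.
case: f => //= [a1 a2|a1 a2|a1 a2|a] _ prem.
- by apply: d_Land; apply: (prem [:: a1; a2] [::]); tauto.
- by apply: d_Lor; [apply: (prem [:: a1] [::]) | apply: (prem [:: a2] [::])]; tauto.
- by apply: d_Limp; [apply: (prem [::] [:: a1]) | apply: (prem [:: a2] [::])]; tauto.
- by apply: d_Lneg; apply: (prem [::] [:: a]); tauto.
Qed.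

Lemma der_ax_in n p G D : In (Var Agt p) G -> In (Var Agt p) D -> der L n G D.
Proof.
move=> inG inD; have [G0 pG] := In_perm_cons inG; have [D0 pD] := In_perm_cons inD.
exact: d_perm (d_ax _ _ _ _ _) (Permutation_sym pG) (Permutation_sym pD).
Qed.

Lemma der_bot_in n G D : In (Bot Agt) G -> der L n G D.
Proof.
move=> inG; have [G0 pG] := In_perm_cons inG.
exact: d_perm (d_bot _ _ _ _) (Permutation_sym pG) (Permutation_refl D).
Qed.

Lemma der_succ n G D : der L n G D -> der L n.+1 G D.
Proof. by elim=> {n G D}; econstructor; eauto. Qed.

(* One-step unfolding of [der] modulo permutation of the sequent; the eight
   propositional rules are merged into [lr_R] and [lr_L]. *)
Inductive last_rule : nat -> seq (form Agt) -> seq (form Agt) -> Prop :=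
| lr_ax n p G D : In (Var Agt p) G -> In (Var Agt p) D -> last_rule n G D
| lr_bot n G D : In (Bot Agt) G -> last_rule n G D
| lr_R n G D D0 f : compound f -> Permutation D (f :: D0) ->
    (forall X Y, In (X, Y) (rpremises f) -> der L n (X ++ G) (Y ++ D0)) -> last_rule n.+1 G D
| lr_L n G D G0 f : compound f -> Permutation G (f :: G0) ->
    (forall X Y, In (X, Y) (lpremises f) -> der L n (X ++ G0) (Y ++ D)) -> last_rule n.+1 G D
| lr_DK n G D Sig Om (ps : seq (grp Agt * form Agt)) H b :
    Permutation G (Sig ++ map box_pair ps) -> Permutation D (Box H b :: Om) ->
    der L n (map snd ps) [:: b] ->
    Forall (fun p : grp Agt * form Agt => val p.1 \subset val H) ps ->
    Forall (sigmaK_ok H) Sig -> Forall (@omega_ok Agt) Om -> last_rule n.+1 G D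
| lr_DD n G D Sig Om Gm a : L = LKD -> Gm <> [::] -> der L n Gm [::] ->
    Permutation G (Sig ++ map (Box (sing a)) Gm) -> Permutation D Om ->
    Forall (sigmaD_ok a) Sig -> Forall (@omega_ok Agt) Om -> last_rule n.+1 G D
| lr_DT n G D G0 H a : L = LKT -> Permutation G (Box H a :: G0) ->
    der L n (Box H a :: a :: G0) D -> last_rule n.+1 G D.

Lemma last_rule_der n G D : last_rule n G D -> der L n G D.
Proof.
case=> {n G D}.
- exact: der_ax_in.
- exact: der_bot_in.
- move=> n G D D0 f cf pD prem.
  exact: d_perm (der_ruleR cf prem) (Permutation_refl G) (Permutation_sym pD).
- move=> n G D G0 f cf pG prem.
  exact: d_perm (der_ruleL cf prem) (Permutation_sym pG) (Permutation_refl D).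
- move=> n G D Sig Om ps H b pG pD prem sub sig om.
  exact: d_perm (d_DK prem sub sig om) (Permutation_sym pG) (Permutation_sym pD).
- move=> n G D Sig Om Gm a lkd ne prem pG pD sig om.
  exact: d_perm (d_DD lkd ne prem sig om) (Permutation_sym pG) (Permutation_sym pD).
- move=> n G D G0 H a lkt pG prem.
  exact: d_perm (d_DT lkt prem) (Permutation_sym pG) (Permutation_refl D).
Qed.

Lemma last_rule_perm n G D G' D' :
  last_rule n G D -> Permutation G G' -> Permutation D D' -> last_rule n G' D'.
Proof.
move=> h pG pD; case: h pG pD => {n G D}.
- move=> n p G D inG inD pG pD; exact: lr_ax (Permutation_in _ pG inG) (Permutation_in _ pD inD).
- move=> n G D inG pG _; exact: lr_bot (Permutation_in _ pG inG).
- move=> n G D D0 f cf pf prem pG pD.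
  apply: (lr_R cf (Permutation_trans (Permutation_sym pD) pf)).
  by move=> X Y /prem h; apply: d_perm h _ _; solve_perm.
- move=> n G D G0 f cf pf prem pG pD.
  apply: (lr_L cf (Permutation_trans (Permutation_sym pG) pf)).
  by move=> X Y /prem h; apply: d_perm h _ _; solve_perm.
- move=> n G D Sig Om ps H b pG0 pD0 prem sub sig om pG pD.
  exact: lr_DK (Permutation_trans (Permutation_sym pG) pG0)
    (Permutation_trans (Permutation_sym pD) pD0) prem sub sig om.
- move=> n G D Sig Om Gm a lkd ne prem pG0 pD0 sig om pG pD.
  exact: lr_DD lkd ne prem (Permutation_trans (Permutation_sym pG) pG0)
    (Permutation_trans (Permutation_sym pD) pD0) sig om.
- move=> n G D G0 H a lkt pG0 prem pG pD.
  apply: (lr_DT lkt (Permutation_trans (Permutation_sym pG) pG0)).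
  exact: d_perm prem (Permutation_refl _) pD.
Qed.

Lemma der_last_rule n G D : der L n G D -> last_rule n G D.
Proof.
elim=> {n G D}.
- by move=> n G D G' D' _ h; apply: last_rule_perm.
- by move=> n p G D; apply: (@lr_ax _ p); left.
- by move=> n G D; apply: lr_bot; left.
- move=> n G D a1 a2 h1 _ h2 _; apply: (lr_R (D0 := D) (f := And a1 a2)) => //.
  by move=> X Y [[<- <-]|[[<- <-]|[]]].
- move=> n G D a1 a2 h _; apply: (lr_L (G0 := G) (f := And a1 a2)) => //.
  by move=> X Y [[<- <-]|[]].
- move=> n G D a1 a2 h _; apply: (lr_R (D0 := D) (f := Or a1 a2)) => //.
  by move=> X Y [[<- <-]|[]].
- move=> n G D a1 a2 h1 _ h2 _; apply: (lr_L (G0 := G) (f := Or a1 a2)) => //.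
  by move=> X Y [[<- <-]|[[<- <-]|[]]].
- move=> n G D a1 a2 h _; apply: (lr_R (D0 := D) (f := Imp a1 a2)) => //.
  by move=> X Y [[<- <-]|[]].
- move=> n G D a1 a2 h1 _ h2 _; apply: (lr_L (G0 := G) (f := Imp a1 a2)) => //.
  by move=> X Y [[<- <-]|[[<- <-]|[]]].
- move=> n G D a h _; apply: (lr_R (D0 := D) (f := Neg a)) => //.
  by move=> X Y [[<- <-]|[]].
- move=> n G D a h _; apply: (lr_L (G0 := G) (f := Neg a)) => //.
  by move=> X Y [[<- <-]|[]].
- move=> n Sig Om ps H b prem _ sub sig om.
  exact: lr_DK (Permutation_refl _) (Permutation_refl _) prem sub sig om.
- move=> n Sig Om Gm a lkd ne prem _ sig om.
  exact: lr_DD lkd ne prem (Permutation_refl _) (Permutation_refl _) sig om.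
- move=> n G D H a lkt prem _.
  exact: lr_DT lkt (Permutation_refl _) prem.
Qed.

Lemma der_invR n G D D0 f X Y : der L n G D -> Permutation D (f :: D0) ->
  In (X, Y) (rpremises f) -> der L n (X ++ G) (Y ++ D0).
Proof.
move=> h pD hXY; have cf := rpremises_compound hXY.
elim/ltn_ind: n G D D0 h pD => n IH G D D0 /der_last_rule h; case: h IH => {n G D}.
- move=> n p G D inG inD _ pD; apply: (@der_ax_in _ p); apply/In_cat; right => //.
  by case: (Permutation_in _ pD inD) => [fp|//]; rewrite fp in cf.
- by move=> n G D inG _ _; apply: der_bot_in; apply/In_cat; right.
- move=> n G D D1 g cg pg prem IH pD.
  case: (perm_cons_cases (Permutation_trans (Permutation_sym pD) pg)) => [[fg p]|[C [p1 p2]]].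
    by subst g; apply: der_succ; apply: d_perm (prem _ _ hXY) _ _; solve_perm.
  apply: last_rule_der; apply: (lr_R (D0 := Y ++ C) cg); first by solve_perm.
  by move=> X' Y' /prem h; apply: d_perm (IH n (ltnSn n) _ _ (Y' ++ C) h _) _ _; solve_perm.
- move=> n G D G0 g cg pg prem IH pD.
  apply: last_rule_der; apply: (lr_L (G0 := X ++ G0) cg); first by solve_perm.
  by move=> X' Y' /prem h; apply: d_perm (IH n (ltnSn n) _ _ (Y' ++ D0) h _) _ _; solve_perm.
- move=> n G D Sig Om ps H b _ pD' _ _ _ om _ pD.
  exfalso; apply: (compound_notin omega_ok_noncompound cf (@Forall_cons _ _ (Box H b) _ I om)).
  exact: Permutation_in (Permutation_trans (Permutation_sym pD) pD') (in_eq f D0).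
- move=> n G D Sig Om Gm a _ _ _ _ pD' _ om _ pD.
  exfalso; apply: (compound_notin omega_ok_noncompound cf om).
  exact: Permutation_in (Permutation_trans (Permutation_sym pD) pD') (in_eq f D0).
- move=> n G D G0 H a lkt pG prem IH pD.
  apply: last_rule_der; apply: (lr_DT (G0 := X ++ G0) (H := H) (a := a) lkt); first by solve_perm.
  by apply: d_perm (IH n (ltnSn n) _ _ D0 prem pD) _ _; solve_perm.
Qed.

Lemma der_invL n G D G0 f X Y : der L n G D -> Permutation G (f :: G0) ->
  In (X, Y) (lpremises f) -> der L n (X ++ G0) (Y ++ D).
Proof.
move=> h pG hXY; have cf := lpremises_compound hXY.
elim/ltn_ind: n G D G0 h pG => n IH G D G0 /der_last_rule h; case: h IH => {n G D}.
- move=> n p G D inG inD _ pG; apply: (@der_ax_in _ p); apply/In_cat; right => //.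
  by case: (Permutation_in _ pG inG) => [fp|//]; rewrite fp in cf.
- move=> n G D inG _ pG; apply: der_bot_in; apply/In_cat; right.
  by case: (Permutation_in _ pG inG) => [fb|//]; rewrite fb in cf.
- move=> n G D D1 g cg pg prem IH pG.
  apply: last_rule_der; apply: (lr_R (D0 := Y ++ D1) cg); first by solve_perm.
  by move=> X' Y' /prem h; apply: d_perm (IH n (ltnSn n) _ _ (X' ++ G0) h _) _ _; solve_perm.
- move=> n G D G1 g cg pg prem IH pG.
  case: (perm_cons_cases (Permutation_trans (Permutation_sym pG) pg)) => [[fg p]|[C [p1 p2]]].
    by subst g; apply: der_succ; apply: d_perm (prem _ _ hXY) _ _; solve_perm.
  apply: last_rule_der; apply: (lr_L (G0 := X ++ C) cg); first by solve_perm.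
  by move=> X' Y' /prem h; apply: d_perm (IH n (ltnSn n) _ _ (X' ++ C) h _) _ _; solve_perm.
- move=> n G D Sig Om ps H b pG' _ _ _ sig _ _ pG.
  exfalso; apply: (compound_notin_cat_map (box := box_pair) (@sigmaK_ok_noncompound H)
                     (fun=> isT) cf sig).
  exact: Permutation_in (Permutation_trans (Permutation_sym pG) pG') (in_eq f G0).
- move=> n G D Sig Om Gm a _ _ _ pG' _ sig _ _ pG.
  exfalso; apply: (compound_notin_cat_map (box := Box (sing a)) (@sigmaD_ok_noncompound a)
                     (fun=> isT) cf sig).
  exact: Permutation_in (Permutation_trans (Permutation_sym pG) pG') (in_eq f G0).
- move=> n G D G1 H a lkt pg prem IH pG.
  case: (perm_cons_cases (Permutation_trans (Permutation_sym pG) pg)) => [[fb _]|[C [p1 p2]]].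
    by rewrite fb in cf.
  apply: last_rule_der; apply: (lr_DT (G0 := X ++ C) (H := H) (a := a) lkt); first by solve_perm.
  by apply: d_perm (IH n (ltnSn n) _ _ (Box H a :: a :: C) prem _) _ _; solve_perm.
Qed.

Definition contractionR n :=
  forall G D D0 l, der L n G D -> Permutation D (l :: l :: D0) -> der L n G (l :: D0).

Definition contractionL n :=
  forall G D G0 l, der L n G D -> Permutation G (l :: l :: G0) -> der L n (l :: G0) D.

Lemma contractionR_cat n : contractionR n ->
  forall Y G D, der L n G (Y ++ Y ++ D) -> der L n G (Y ++ D).
Proof.
move=> ctr; elim=> // y Y IH G D h.
have h1 : der L n G (y :: Y ++ Y ++ D) by apply: ctr h _; solve_perm.
have h2 : der L n G (Y ++ Y ++ y :: D) by apply: d_perm h1 _ _; solve_perm.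
by apply: d_perm (IH _ _ h2) _ _; solve_perm.
Qed.

Lemma contractionL_cat n : contractionL n ->
  forall X G D, der L n (X ++ X ++ G) D -> der L n (X ++ G) D.
Proof.
move=> ctr; elim=> // x X IH G D h.
have h1 : der L n (x :: X ++ X ++ G) D by apply: ctr h _; solve_perm.
have h2 : der L n (X ++ X ++ x :: G) D by apply: d_perm h1 _ _; solve_perm.
by apply: d_perm (IH _ _ h2) _ _; solve_perm.
Qed.

Lemma contractionR_step n :
  (forall k, k < n -> contractionR k /\ contractionL k) -> contractionR n.
Proof.
move=> IH G D D0 l /der_last_rule h; case: h IH => {n G D}.
- move=> n p G D inG inD _ pD; apply: (der_ax_in _ inG).
  by move: (Permutation_in _ pD inD) => /=; tauto.
- by move=> n G D inG _ _; apply: der_bot_in.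
- move=> n G D D1 f cf pf prem IH pD; have [ctrR ctrL] := IH n (ltnSn n).
  case: (perm_dup_cases (Permutation_trans (Permutation_sym pD) pf)) => [[lf p]|[C [p1 p2]]].
    subst f; apply: last_rule_der; apply: (lr_R cf (Permutation_refl _)) => X Y hXY.
    have inv : der L n (X ++ X ++ G) (Y ++ Y ++ D0).
      by apply: der_invR (prem _ _ hXY) _ hXY; solve_perm.
    exact (contractionL_cat ctrL (contractionR_cat ctrR inv)).
  apply: last_rule_der; apply: (lr_R (D0 := l :: C) cf); first by solve_perm.
  by move=> X Y /prem h; apply: d_perm (ctrR _ _ (Y ++ C) l h _) _ _; solve_perm.
- move=> n G D G0 f cf pf prem IH pD; have [ctrR _] := IH n (ltnSn n).
  apply: last_rule_der; apply: (lr_L cf pf) => X Y /prem h.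
  by apply: d_perm (ctrR _ _ (Y ++ D0) l h _) _ _; solve_perm.
- move=> n G D Sig Om ps H b pG pb prem sub sig om _ pD.
  have [Om' pl pOm] := perm_contract_cons (Permutation_trans (Permutation_sym pD) pb).
  apply: last_rule_der; apply: (lr_DK pG pl prem sub sig).
  exact: Forall_inv_tail (Permutation_Forall pOm om).
- move=> n G D Sig Om Gm a lkd ne prem pG pOm sig om _ pD.
  apply: last_rule_der; apply: (lr_DD lkd ne prem pG (Permutation_refl _) sig).
  exact: Forall_inv_tail (Permutation_Forall (Permutation_trans (Permutation_sym pOm) pD) om).
- move=> n G D G0 H a lkt pG prem IH pD; have [ctrR _] := IH n (ltnSn n).
  exact: last_rule_der (lr_DT lkt pG (ctrR _ _ D0 l prem pD)).
Qed.

Lemma contractionL_step n :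
  (forall k, k < n -> contractionR k /\ contractionL k) -> contractionL n.
Proof.
move=> IH G D G0 l /der_last_rule h; case: h IH => {n G D}.
- move=> n p G D inG inD _ pG; apply: (der_ax_in _ _ inD).
  by move: (Permutation_in _ pG inG) => /=; tauto.
- by move=> n G D inG _ pG; apply: der_bot_in; move: (Permutation_in _ pG inG) => /=; tauto.
- move=> n G D D0 f cf pf prem IH pG; have [_ ctrL] := IH n (ltnSn n).
  apply: last_rule_der; apply: (lr_R cf pf) => X Y /prem h.
  by apply: d_perm (ctrL _ _ (X ++ G0) l h _) _ _; solve_perm.
- move=> n G D G1 f cf pf prem IH pG; have [ctrR ctrL] := IH n (ltnSn n).
  case: (perm_dup_cases (Permutation_trans (Permutation_sym pG) pf)) => [[lf p]|[C [p1 p2]]].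
    subst f; apply: last_rule_der; apply: (lr_L cf (Permutation_refl _)) => X Y hXY.
    have inv : der L n (X ++ X ++ G0) (Y ++ Y ++ D).
      by apply: der_invL (prem _ _ hXY) _ hXY; solve_perm.
    exact (contractionL_cat ctrL (contractionR_cat ctrR inv)).
  apply: last_rule_der; apply: (lr_L (G0 := l :: C) cf); first by solve_perm.
  by move=> X Y /prem h; apply: d_perm (ctrL _ _ (X ++ C) l h _) _ _; solve_perm.
- move=> n G D Sig Om ps H b pG pD prem sub sig om IH pl; have [_ ctrL] := IH n (ltnSn n).
  case: (perm_dup_cat_map box_pair_inj (Permutation_trans (Permutation_sym pl) pG)).
    move=> [Sig' pS pl']; apply: last_rule_der; apply: (lr_DK pl' pD prem sub _ om).
    exact: Forall_inv_tail (Permutation_Forall pS sig).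
  move=> [t [ps' [_ pt pl']]].
  have psnd : Permutation (map snd ps) (snd t :: snd t :: map snd ps').
    by rewrite !map_List_map; exact (Permutation_map snd pt).
  apply: last_rule_der; apply: (lr_DK pl' pD (ctrL _ _ _ _ prem psnd) _ sig om).
  exact: Forall_inv_tail (Permutation_Forall pt sub).
- move=> n G D Sig Om Gm a lkd ne prem pG pD sig om IH pl; have [_ ctrL] := IH n (ltnSn n).
  have box_inj : injective (Box (sing a)) by move=> x y [].
  case: (perm_dup_cat_map box_inj (Permutation_trans (Permutation_sym pl) pG)).
    move=> [Sig' pS pl']; apply: last_rule_der; apply: (lr_DD lkd ne prem pl' pD _ om).
    exact: Forall_inv_tail (Permutation_Forall pS sig).
  move=> [g [Gm' [_ pg pl']]]; apply: last_rule_der.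
  by apply: (lr_DD lkd _ (ctrL _ _ _ _ prem pg) pl' pD sig om).
- move=> n G D G1 H a lkt pG prem IH pl; have [_ ctrL] := IH n (ltnSn n).
  have [G1' pl' _] := perm_contract_cons (Permutation_trans (Permutation_sym pl) pG).
  apply: last_rule_der; apply: (lr_DT (G0 := G1') lkt pl').
  by apply: d_perm (ctrL _ _ (a :: G0) l prem _) _ _; solve_perm.
Qed.

Lemma contraction n : contractionR n /\ contractionL n.
Proof.
elim/ltn_ind: n => n IH.
by split; [apply: contractionR_step | apply: contractionL_step].
Qed.

End Contraction.

Theorem proposition3p10 (Agt : finType) (hAgt : 0 < #|Agt|) (L : logic)
  (Gm Dl : list (form Agt)) (lam : form Agt) (n : nat) :
  (der L n Gm (Dl ++ [:: lam; lam]) -> der L n Gm (Dl ++ [:: lam])) /\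
  (der L n (lam :: lam :: Gm) Dl -> der L n (lam :: Gm) Dl).
Proof.
have [ctrR ctrL] := @contraction Agt L n.
split=> h; last exact: ctrL _ _ Gm lam h (Permutation_refl _).
by apply: d_perm (ctrR _ _ Dl lam h _) _ _; solve_perm.
Qed.
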